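(* Let $X$ be an infinite-dimensional separable Banach space over $\mathbb{K}\in\{\mathbb{R},\mathbb{C}\}$, and let $T, S \in \mathcal{B}(X)$ with $T = \lambda I + S$ for some $\lambda \in \mathbb{K}$. Suppose $T$ is hypercyclic. Then the following assertions are equivalent: (i) $T$ satisfies the Hypercyclicity Criterion; (ii) $T$ satisfies the Cyclicity Criterion; (iii) $S$ satisfies the Cyclicity Criterion; (iv) $S \oplus S$ is cyclic on $X \oplus X$; (v) $T \oplus T$ is cyclic on $X \oplus X$; (vi) $T \oplus T$ is hypercyclic on $X \oplus X$.
   Context: $\mathcal{B}(X)$ denotes the algebra of bounded linear operators on $X$. An operator $T \in \mathcal{B}(X)$ is hypercyclic if there is $x \in X$ with $\{T^n x : n \ge 0\}$ dense in $X$; it is cyclic if there is $x\in X$ with $\operatorname{span}\{T^n x : n\ge 0\}$ dense in $X$. $T\oplus T$ denotes the operator $(x,y)\mapsto (Tx,Ty)$ on $X\oplus X$. $T$ satisfies the Hypercyclicity Criterion if there exist dense subsets $X_0, Y_0 \subseteq X$, an increasing sequence $(n_k)_{k\ge1}$ of positive integers, and maps (not necessarily linear or continuous) $S_{n_k}: Y_0 \to X$ such that: $T^{n_k}x \to 0$ for every $x \in X_0$; $S_{n_k}y \to 0$ for every $y \in Y_0$; and $T^{n_k}S_{n_k}y \to y$ for every $y \in Y_0$. An operator $A\in\mathcal{B}(X)$ satisfies the Cyclicity Criterion if there exist dense subsets $V, W \subseteq X$, a sequence $(p_k)_{k\ge1}$ of polynomials in $\mathbb{K}[x]$, and maps (not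 necessarily linear or continuous) $S_k : W \to X$ such that: $p_k(A)x \to 0$ for every $x \in V$; $S_k x \to 0$ for every $x \in W$; and $p_k(A)S_k x \to x$ for every $x \in W$. *)

From Stdlib Require Import Reals List.
Open Scope R_scope.

Record Scal := {
  sK :> Type;
  s0 : sK; s1 : sK;
  sadd : sK -> sK -> sK;
  smul : sK -> sK -> sK;
  sopp : sK -> sK;
  sabs : sK -> R }.

Definition RScal : Scal :=
  {| sK := R; s0 := 0; s1 := 1; sadd := Rplus; smul := Rmult;
     sopp := Ropp; sabs := Rabs |}.

(* complex numbers as pairs (re, im) *)
Definition Cnum := (R * R)%type.
Definition Cadd (z w : Cnum) : Cnum := (fst z + fst w, snd z + snd w).
Definition Cmul (z w : Cnum) : Cnum :=
  (fst z * fst w - snd z * snd w, fst z * snd w + snd z * fst w).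
Definition Copp (z : Cnum) : Cnum := (- fst z, - snd z).
Definition Cabs (z : Cnum) : R := sqrt (fst z * fst z + snd z * snd z).

Definition CScal : Scal :=
  {| sK := Cnum; s0 := (0, 0); s1 := (1, 0); sadd := Cadd; smul := Cmul;
     sopp := Copp; sabs := Cabs |}.

Inductive KKind := KReal | KComplex.
Definition Kof (k : KKind) : Scal :=
  match k with KReal => RScal | KComplex => CScal end.

Record VecOps (K : Scal) := {
  vcar :> Type;
  vzero : vcar;
  vadd : vcar -> vcar -> vcar;
  vopp : vcar -> vcar;
  vscal : K -> vcar -> vcar;
  vnorm : vcar -> R }.
Arguments vcar {K} _.
Arguments vzero {K} _.
Arguments vadd {K} _ _ _.
Arguments vopp {K} _ _.
Arguments vscal {K} _ _ _.
Arguments vnorm {K} _ _.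

Section Generic.
Context {K : Scal} (X : VecOps K).

Definition vsub (x y : X) : X := vadd X x (vopp X y).
Definition dist (x y : X) : R := vnorm X (vsub x y).

Definition seq_conv (u : nat -> X) (l : X) : Prop :=
  forall eps, eps > 0 -> exists N, forall k, (N <= k)%nat -> dist (u k) l < eps.

Definition cauchy (u : nat -> X) : Prop :=
  forall eps, eps > 0 -> exists N, forall m n, (N <= m)%nat -> (N <= n)%nat ->
    dist (u m) (u n) < eps.

Definition dense (D : X -> Prop) : Prop :=
  forall y eps, eps > 0 -> exists x, D x /\ dist x y < eps.

Definition separable : Prop :=
  exists d : nat -> X, dense (fun x => exists n, x = d n).

Fixpoint lincomb (l : list (K * X)) : X :=
  match l with
  | nil => vzero X
  | p :: l' => vadd X (vscal X (fst p) (snd p)) (lincomb l')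
  end.

Definition finite_dim : Prop :=
  exists vs : list X, forall y : X, exists l : list (K * X),
    (forall p, In p l -> In (snd p) vs) /\ y = lincomb l.

Definition infinite_dim : Prop := ~ finite_dim.

Definition bounded_linear (T : X -> X) : Prop :=
  (forall x y, T (vadd X x y) = vadd X (T x) (T y)) /\
  (forall a x, T (vscal X a x) = vscal X a (T x)) /\
  (exists M, forall x, vnorm X (T x) <= M * vnorm X x).

Definition itr (T : X -> X) (n : nat) (x : X) : X := Nat.iter n T x.

(* p(A) x for the polynomial p = c_0 + c_1 t + ... (coefficient list [c_0; c_1; ...]),
   i.e. sum_k c_k A^k x *)
Fixpoint peval (A : X -> X) (p : list K) (x : X) : X :=
  match p with
  | nil => vzero X
  | c :: p' => vadd X (vscal X c x) (peval A p' (A x))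
  end.

Definition hypercyclic (T : X -> X) : Prop :=
  exists x, dense (fun y => exists n, y = itr T n x).

(* span{T^n x : n >= 0} = { p(T) x : p polynomial } *)
Definition cyclic (T : X -> X) : Prop :=
  exists x, dense (fun y => exists p : list K, y = peval T p x).

Definition HypercyclicityCriterion (T : X -> X) : Prop :=
  exists (X0 Y0 : X -> Prop) (n : nat -> nat) (Sk : nat -> X -> X),
    dense X0 /\ dense Y0 /\
    (forall k, (0 < n k)%nat) /\ (forall k, (n k < n (Datatypes.S k))%nat) /\
    (forall x, X0 x -> seq_conv (fun k => itr T (n k) x) (vzero X)) /\
    (forall y, Y0 y -> seq_conv (fun k => Sk k y) (vzero X)) /\
    (forall y, Y0 y -> seq_conv (fun k => itr T (n k) (Sk k y)) y).

Definition CyclicityCriterion (A : X -> X) : Prop :=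
  exists (V W : X -> Prop) (p : nat -> list K) (S : nat -> X -> X),
    dense V /\ dense W /\
    (forall x, V x -> seq_conv (fun k => peval A (p k) x) (vzero X)) /\
    (forall x, W x -> seq_conv (fun k => S k x) (vzero X)) /\
    (forall x, W x -> seq_conv (fun k => peval A (p k) (S k x)) x).

End Generic.

Definition prodOps {K : Scal} (X : VecOps K) : VecOps K :=
  @Build_VecOps K (vcar X * vcar X)%type
     (vzero X, vzero X)
     (fun p q => (vadd X (fst p) (fst q), vadd X (snd p) (snd q)))
     (fun p => (vopp X (fst p), vopp X (snd p)))
     (fun a p => (vscal X a (fst p), vscal X a (snd p)))
     (fun p => Rmax (vnorm X (fst p)) (vnorm X (snd p))).

Definition dsum {K : Scal} {X : VecOps K} (T : X -> X) : prodOps X -> prodOps X :=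
  fun p => (T (fst p), T (snd p)).

Record Banach (K : Scal) := {
  bops :> VecOps K;
  ax_addA : forall x y z : bops, vadd bops x (vadd bops y z) = vadd bops (vadd bops x y) z;
  ax_addC : forall x y : bops, vadd bops x y = vadd bops y x;
  ax_add0 : forall x : bops, vadd bops x (vzero bops) = x;
  ax_addN : forall x : bops, vadd bops x (vopp bops x) = vzero bops;
  ax_scal1 : forall x : bops, vscal bops (s1 K) x = x;
  ax_scalA : forall (a b : K) (x : bops), vscal bops a (vscal bops b x) = vscal bops (smul K a b) x;
  ax_scalDl : forall (a b : K) (x : bops),
      vscal bops (sadd K a b) x = vadd bops (vscal bops a x) (vscal bops b x);
  ax_scalDr : forall (a : K) (x y : bops),
      vscal bops a (vadd bops x y) = vadd bops (vscal bops a x) (vscal bops a y);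
  ax_norm_eq0 : forall x : bops, vnorm bops x = 0 -> x = vzero bops;
  ax_norm_triangle : forall x y : bops, vnorm bops (vadd bops x y) <= vnorm bops x + vnorm bops y;
  ax_norm_scal : forall (a : K) (x : bops), vnorm bops (vscal bops a x) = sabs K a * vnorm bops x;
  ax_complete : forall u : nat -> bops, cauchy bops u -> exists l, seq_conv bops u l }.

(* Polynomials in [T = lam I + S] are exactly the polynomials in [S], so the Cyclicity
   Criterion and cyclicity of the direct sum pass freely between [T] and [S].  Taking
   monomials turns the Hypercyclicity Criterion into the Cyclicity Criterion.  If [T]
   satisfies the Cyclicity Criterion and has a dense orbit, then [T (+) T] is
   topologically transitive, and the Birkhoff transitivity theorem (a Baire category
   argument, fed with pairs of orbit points as a countable dense set) makes it
   hypercyclic.  Conversely, if [(u, v)] is a cyclic (resp. hypercyclic) vector of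
   [A (+) A], approximating [(u, 0)] and [(0, u)] by points of its orbit produces
   polynomials [p_k] (resp. powers [A^(n_k)]) and vectors [z_k -> 0] with [p_k(A) u -> 0]
   and [p_k(A) z_k -> u], which is the criterion on the dense set of the [q(A) u]. *)

From Stdlib Require Import Reals List Lra Lia Cantor Classical ClassicalEpsilon.
From Pilot Require Import Defs.
Open Scope R_scope.

Class ScalarLaws (K : Scal) := {
  sadd00 : sadd K (s0 K) (s0 K) = s0 K;
  sabs_ge0 : forall a, 0 <= sabs K a;
  sminus1 : K;
  sadd_minus1 : sadd K sminus1 (s1 K) = s0 K;
  sabs_minus1 : sabs K sminus1 = 1;
  smulC : forall a b, smul K a b = smul K b a;
  sofR : R -> K;
  sabs_ofR : forall t, sabs K (sofR t) = Rabs t }.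

#[export] Instance Kof_laws (kk : KKind) : ScalarLaws (Kof kk).
Proof.
  destruct kk.
  - refine (@Build_ScalarLaws RScal _ _ (-1) _ _ _ (fun t : R => t) _); simpl.
    + ring.
    + intro a. apply Rabs_pos.
    + ring.
    + rewrite Rabs_left by lra. ring.
    + intros a b. apply Rmult_comm.
    + reflexivity.
  - refine (@Build_ScalarLaws CScal _ _ (-1, 0) _ _ _ (fun t : R => (t, 0)) _);
      simpl; unfold Cadd, Cmul, Cabs; simpl.
    + f_equal; ring.
    + intro a. apply sqrt_pos.
    + f_equal; ring.
    + replace (-1 * -1 + 0 * 0) with 1 by ring. apply sqrt_1.
    + intros [a b] [c d]. simpl. f_equal; ring.
    + intro t. replace (t * t + 0 * 0) with (Rsqr t) by (unfold Rsqr; ring).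
      apply sqrt_Rsqr_abs.
Defined.

Lemma increasing_choice (Q : nat -> nat -> Prop) :
  (forall k N, exists n, (N < n)%nat /\ Q k n) ->
  exists ns : nat -> nat,
    (forall k, (0 < ns k)%nat) /\ (forall k, (ns k < ns (S k))%nat) /\ forall k, Q k (ns k).
Proof.
  intro HQ. destruct (choice (fun kN n => (snd kN < n)%nat /\ Q (fst kN) n)) as [f Hf].
  { intros [k N]. apply HQ. }
  set (ns := fix ns k := match k with O => f (O, O) | S k => f (S k, ns k) end).
  assert (Hns : forall k, (match k with O => O | S k => ns k end < ns k)%nat /\ Q k (ns k)).
  { intros [|k]; [exact (Hf (O, O)) | exact (Hf (S k, ns k))]. }
  exists ns. split; [|split].
  - intro k. induction k as [|k IH]; [exact (proj1 (Hns O))|].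
    assert (H := proj1 (Hns (S k))). lia.
  - intro k. apply (Hns (S k)).
  - intro k. apply Hns.
Qed.

Section NormedSpace.
Context {K : Scal} {laws : ScalarLaws K} (B : Banach K).

Local Notation vad := (vadd B).
Local Notation vop := (vopp B).
Local Notation vz := (vzero B).
Local Notation vsc := (vscal B).
Local Notation nrm := (vnorm B).
Local Notation dst := (Defs.dist B).

Lemma vadd0l x : vad vz x = x.
Proof. rewrite ax_addC; apply ax_add0. Qed.

Lemma vaddNl x : vad (vop x) x = vz.
Proof. rewrite ax_addC; apply ax_addN. Qed.

Lemma vaddI x y z : vad x y = vad x z -> y = z.
Proof.
  intro H. rewrite <- (vadd0l y), <- (vadd0l z), <- (vaddNl x), <- !ax_addA, H.
  reflexivity.
Qed.

Lemma vopp_unique a x : vad a x = vz -> a = vop x.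
Proof. intro H. apply (vaddI x). rewrite ax_addC, H, ax_addN. reflexivity. Qed.

Lemma vaddACA a b c d : vad (vad a b) (vad c d) = vad (vad a c) (vad b d).
Proof. rewrite <- !ax_addA. f_equal. rewrite !ax_addA. f_equal. apply ax_addC. Qed.

Lemma vscal0l x : vsc (s0 K) x = vz.
Proof.
  apply (vaddI (vsc (s0 K) x)). rewrite <- ax_scalDl, sadd00, ax_add0. reflexivity.
Qed.

Lemma vscal0r a : vsc a vz = vz.
Proof. apply (vaddI (vsc a vz)). rewrite <- ax_scalDr, !ax_add0. reflexivity. Qed.

Lemma vscal_minus1 x : vsc sminus1 x = vop x.
Proof.
  apply vopp_unique. rewrite <- (ax_scal1 K B x) at 2.
  rewrite <- ax_scalDl, sadd_minus1. apply vscal0l.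
Qed.

Lemma vopp0 : vop vz = vz.
Proof. symmetry. apply vopp_unique, ax_add0. Qed.

Lemma voppK x : vop (vop x) = x.
Proof. symmetry. apply vopp_unique, ax_addN. Qed.

Lemma voppD x y : vop (vad x y) = vad (vop x) (vop y).
Proof. symmetry. apply vopp_unique. rewrite vaddACA, !vaddNl. apply ax_add0. Qed.

Lemma vnorm0 : nrm vz = 0.
Proof. rewrite <- (vscal0r (sofR 0)), ax_norm_scal, sabs_ofR, Rabs_R0. ring. Qed.

Lemma vnormN x : nrm (vop x) = nrm x.
Proof. rewrite <- vscal_minus1, ax_norm_scal, sabs_minus1. ring. Qed.

Lemma vnorm_ge0 x : 0 <= nrm x.
Proof.
  assert (H := ax_norm_triangle K B x (vop x)). rewrite ax_addN, vnorm0, vnormN in H. lra.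
Qed.

Lemma dist_x0 x : dst x vz = nrm x.
Proof. unfold Defs.dist, vsub. rewrite vopp0, ax_add0. reflexivity. Qed.

Lemma dist_refl x : dst x x = 0.
Proof. unfold Defs.dist, vsub. rewrite ax_addN. apply vnorm0. Qed.

Lemma dist_sym x y : dst x y = dst y x.
Proof.
  unfold Defs.dist, vsub. rewrite <- vnormN, voppD, voppK, ax_addC. reflexivity.
Qed.

Lemma dist_triangle x y z : dst x z <= dst x y + dst y z.
Proof.
  unfold Defs.dist, vsub.
  replace (vad x (vop z)) with (vad (vad x (vop y)) (vad y (vop z))).
  - apply ax_norm_triangle.
  - rewrite <- ax_addA, (ax_addA K B (vop y)), vaddNl, vadd0l. reflexivity.
Qed.

Lemma dist_addD x y a b : dst (vad x y) (vad a b) <= dst x a + dst y b.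
Proof. unfold Defs.dist, vsub. rewrite voppD, vaddACA. apply ax_norm_triangle. Qed.

Section Operators.
Variables f g : B -> B.
Hypotheses (Hf : bounded_linear B f) (Hg : bounded_linear B g).

Lemma bl_add x y : f (vad x y) = vad (f x) (f y).
Proof. apply Hf. Qed.

Lemma bl_scal a x : f (vsc a x) = vsc a (f x).
Proof. apply Hf. Qed.

Lemma bl_zero : f vz = vz.
Proof. apply (vaddI (f vz)). rewrite <- bl_add, !ax_add0. reflexivity. Qed.

Lemma bl_opp x : f (vop x) = vop (f x).
Proof. apply vopp_unique. rewrite <- bl_add, vaddNl. apply bl_zero. Qed.

Lemma bl_bound : exists M, 0 < M /\ forall x, nrm (f x) <= M * nrm x.
Proof.
  destruct Hf as [_ [_ [M HM]]]. exists (Rmax M 1). split.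
  - apply Rlt_le_trans with 1; [lra | apply Rmax_r].
  - intro x. eapply Rle_trans; [apply HM|].
    apply Rmult_le_compat_r; [apply vnorm_ge0 | apply Rmax_l].
Qed.

Lemma bl_continuous eps : 0 < eps ->
  exists delta, 0 < delta /\ forall x y, dst x y < delta -> dst (f x) (f y) < eps.
Proof.
  intro Heps. destruct bl_bound as [M [HM HMf]].
  exists (eps / M). split; [apply Rdiv_lt_0_compat; assumption|].
  intros x y Hxy. unfold Defs.dist, vsub in *. rewrite <- bl_opp, <- bl_add.
  eapply Rle_lt_trans; [apply HMf|].
  apply Rmult_lt_compat_l with (r := M) in Hxy; [|assumption].
  replace (M * (eps / M)) with eps in Hxy by (field; lra). exact Hxy.
Qed.

Lemma bl_open_preimage z t eps : dst (f z) t < eps ->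
  exists delta, 0 < delta /\ forall w, dst w z < delta -> dst (f w) t < eps.
Proof.
  intro Hz. destruct (bl_continuous (eps - dst (f z) t)) as [delta [Hd Hcont]]; [lra|].
  exists delta. split; [assumption|]. intros w Hw.
  assert (H := dist_triangle (f w) (f z) t). specialize (Hcont w z Hw). lra.
Qed.

Lemma bl_comp : bounded_linear B (fun x => f (g x)).
Proof.
  destruct bl_bound as [M [HM HMf]]. destruct Hg as [Ha [Hs [N HN]]].
  split; [|split].
  - intros x y. rewrite Ha. apply bl_add.
  - intros a x. rewrite Hs. apply bl_scal.
  - exists (M * N). intro x. eapply Rle_trans; [apply HMf|].
    rewrite Rmult_assoc. apply Rmult_le_compat_l; [lra | apply HN].
Qed.

Lemma bl_plus : bounded_linear B (fun x => vad (f x) (g x)).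
Proof.
  destruct bl_bound as [M [_ HMf]]. destruct Hg as [Ha [Hs [N HN]]].
  split; [|split].
  - intros x y. rewrite Ha, bl_add. apply vaddACA.
  - intros a x. rewrite Hs, bl_scal, ax_scalDr. reflexivity.
  - exists (M + N). intro x. eapply Rle_trans; [apply ax_norm_triangle|].
    rewrite Rmult_plus_distr_r. apply Rplus_le_compat; [apply HMf | apply HN].
Qed.

End Operators.

Lemma bl_id : bounded_linear B (fun x => x).
Proof. split; [|split]; auto. exists 1. intro x. lra. Qed.

Lemma bl_vscal a : bounded_linear B (vsc a).
Proof.
  split; [|split].
  - apply ax_scalDr.
  - intros c x. rewrite !ax_scalA, smulC. reflexivity.
  - exists (sabs K a). intro x. rewrite ax_norm_scal. lra.
Qed.

Lemma bl_const0 : bounded_linear B (fun _ => vz).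
Proof.
  split; [|split].
  - intros x y. symmetry. apply ax_add0.
  - intros a x. symmetry. apply vscal0r.
  - exists 0. intro x. rewrite vnorm0. lra.
Qed.

Lemma itr_commute f g n x : (forall y, g (f y) = f (g y)) ->
  g (itr B f n x) = itr B f n (g x).
Proof.
  intro H. induction n as [|n IH]; simpl; [reflexivity|]. rewrite H. f_equal. exact IH.
Qed.

Lemma itr_itr f n m x : itr B f n (itr B f m x) = itr B f m (itr B f n x).
Proof. unfold itr. rewrite <- !Nat.iter_add, Nat.add_comm. reflexivity. Qed.

Lemma bl_itr f n : bounded_linear B f -> bounded_linear B (itr B f n).
Proof.
  intro Hf. induction n as [|n IH]; [apply bl_id|]. exact (bl_comp f _ Hf IH).
Qed.

Lemma bl_peval A p : bounded_linear B A -> bounded_linear B (peval B A p).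
Proof.
  intro HA. induction p as [|c p IH]; [apply bl_const0|].
  exact (bl_plus _ _ (bl_vscal c) (bl_comp _ _ IH HA)).
Qed.

Lemma peval_commute A g p x : bounded_linear B g -> (forall y, g (A y) = A (g y)) ->
  g (peval B A p x) = peval B A p (g x).
Proof.
  intros Hg HA. revert x. induction p as [|c p IH]; intro x; simpl.
  - apply bl_zero, Hg.
  - rewrite bl_add, bl_scal, IH, HA by exact Hg. reflexivity.
Qed.

Lemma peval_peval A p q x : bounded_linear B A ->
  peval B A p (peval B A q x) = peval B A q (peval B A p x).
Proof.
  intro HA. apply peval_commute; [apply bl_peval, HA|].
  intro y. symmetry. apply peval_commute; [exact HA | reflexivity].
Qed.

Lemma itr_peval A n p x : bounded_linear B A ->
  itr B A n (peval B A p x) = peval B A p (itr B A n x).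
Proof.
  intro HA. apply peval_commute; [apply bl_itr, HA|].
  intro y. symmetry. apply itr_commute. reflexivity.
Qed.

Fixpoint monomial (n : nat) : list K :=
  match n with O => s1 K :: nil | S n => s0 K :: monomial n end.

Lemma peval_monomial A n x : peval B A (monomial n) x = itr B A n x.
Proof.
  revert x. induction n as [|n IH]; intro x; simpl.
  - rewrite ax_scal1, ax_add0. reflexivity.
  - rewrite vscal0l, vadd0l, IH. symmetry. apply itr_commute. reflexivity.
Qed.

Fixpoint padd (p q : list K) : list K :=
  match p, q with
  | nil, q => q
  | p, nil => p
  | a :: p', b :: q' => sadd K a b :: padd p' q'
  end.

Lemma peval_padd A p q x : peval B A (padd p q) x = vad (peval B A p x) (peval B A q x).
Proof.
  revert q x. induction p as [|a p IH]; intros [|b q] x; simpl.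
  - rewrite ax_add0. reflexivity.
  - rewrite vadd0l. reflexivity.
  - rewrite ax_add0. reflexivity.
  - rewrite IH, ax_scalDl. apply vaddACA.
Qed.

Lemma peval_scale A mu q x : peval B A (map (smul K mu) q) x = vsc mu (peval B A q x).
Proof.
  revert x. induction q as [|c q IH]; intro x; simpl.
  - rewrite vscal0r. reflexivity.
  - rewrite IH, ax_scalDr, ax_scalA. reflexivity.
Qed.

Definition polys_in (A C : B -> B) : Prop :=
  forall p, exists q, forall x, peval B A p x = peval B C q x.

Lemma shift_polys_in A C mu : bounded_linear B C ->
  (forall x, A x = vad (vsc mu x) (C x)) -> polys_in A C.
Proof.
  intros HC HAC p. induction p as [|c p [q IH]]; [exists nil; reflexivity|].
  exists (padd (c :: nil) (padd (map (smul K mu) q) (s0 K :: q))). intro x.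
  rewrite !peval_padd, peval_scale. simpl.
  rewrite IH, HAC, bl_add, bl_scal, vscal0l, vadd0l, ax_add0 by apply bl_peval, HC.
  reflexivity.
Qed.

Lemma shift_polys_equiv A C mu : bounded_linear B A -> bounded_linear B C ->
  (forall x, A x = vad (vsc mu x) (C x)) -> polys_in A C /\ polys_in C A.
Proof.
  intros HA HC HAC. split; [exact (shift_polys_in A C mu HC HAC)|].
  apply (shift_polys_in C A (smul K sminus1 mu) HA). intro x.
  rewrite HAC, <- ax_scalA, vscal_minus1, ax_addA, vaddNl, vadd0l. reflexivity.
Qed.

Lemma seq_conv_ext u v a : (forall k, u k = v k) -> seq_conv B u a -> seq_conv B v a.
Proof.
  intros H Hu eps He. destruct (Hu eps He) as [N HN].
  exists N. intros k Hk. rewrite <- H. auto.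
Qed.

Lemma seq_conv_bl f u a : bounded_linear B f ->
  seq_conv B u a -> seq_conv B (fun k => f (u k)) (f a).
Proof.
  intros Hf Hu eps Heps. destruct (bl_continuous f Hf eps Heps) as [delta [Hd Hcont]].
  destruct (Hu delta Hd) as [N HN]. exists N. intros k Hk. apply Hcont, HN, Hk.
Qed.

Lemma seq_conv_harmonic u a : (forall k, dst (u k) a < / (INR k + 1)) -> seq_conv B u a.
Proof.
  intros H eps He. destruct (INR_archimed eps 1 He) as [n Hn]. exists n. intros k Hk.
  eapply Rlt_le_trans; [apply H|]. apply le_INR in Hk.
  assert (Hp : 0 < INR k + 1) by (assert (h := pos_INR k); lra).
  apply (Rmult_le_reg_r (INR k + 1)); [exact Hp|]. rewrite Rinv_l by lra. nra.
Qed.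

Lemma seq_conv_dist_le u l a rho N : seq_conv B u l ->
  (forall m, (N <= m)%nat -> dst (u m) a <= rho) -> dst l a <= rho.
Proof.
  intros Hu Hb. apply Rnot_lt_le. intro Hlt.
  destruct (Hu (dst l a - rho)) as [M HM]; [lra|].
  assert (H1 := HM (Nat.max N M) ltac:(lia)). assert (H2 := Hb (Nat.max N M) ltac:(lia)).
  assert (H3 := dist_triangle l (u (Nat.max N M)) a). rewrite dist_sym in H1. lra.
Qed.

Lemma dense_mono (D D' : B -> Prop) : (forall x, D x -> D' x) -> dense B D -> dense B D'.
Proof.
  intros HDD' HD y eps Heps. destruct (HD y eps Heps) as [x [Hx Hxy]].
  exists x. split; [apply HDD', Hx | exact Hxy].
Qed.

Lemma HC_CC A : HypercyclicityCriterion B A -> CyclicityCriterion B A.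
Proof.
  intros [X0 [Y0 [n [Sk [H1 [H2 [_ [_ [H5 [H6 H7]]]]]]]]]].
  exists X0, Y0, (fun k => monomial (n k)), Sk. repeat split; auto; intros x Hx.
  - eapply seq_conv_ext; [|exact (H5 x Hx)]. intro k. symmetry. apply peval_monomial.
  - eapply seq_conv_ext; [|exact (H7 x Hx)]. intro k. symmetry. apply peval_monomial.
Qed.

Lemma hypercyclic_cyclic A : hypercyclic B A -> cyclic B A.
Proof.
  intros [x Hx]. exists x. intros y eps He. destruct (Hx y eps He) as [w [[n ->] Hw]].
  exists (itr B A n x). split; [|exact Hw].
  exists (monomial n). symmetry. apply peval_monomial.
Qed.

Lemma CC_polys_in A C : polys_in A C -> CyclicityCriterion B A -> CyclicityCriterion B C.
Proof.
  intros HAC [V [W [p [Sk [H1 [H2 [H3 [H4 H5]]]]]]]].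
  destruct (choice (fun k q => forall x, peval B A (p k) x = peval B C q x)) as [q Hq].
  { intro k. apply HAC. }
  exists V, W, q, Sk. repeat split; auto; intros x Hx.
  - eapply seq_conv_ext; [|exact (H3 x Hx)]. intro k. apply Hq.
  - eapply seq_conv_ext; [|exact (H5 x Hx)]. intro k. apply Hq.
Qed.

Lemma cyclic_polys_in A C : polys_in A C -> cyclic B A -> cyclic B C.
Proof.
  intros HAC [x Hx]. exists x. intros y eps He. destruct (Hx y eps He) as [w [[p ->] Hw]].
  destruct (HAC p) as [q Hq]. exists (peval B A p x). split; [|exact Hw].
  exists q. apply Hq.
Qed.

(* The right inverses are [S k (ev g u) := ev g (z k)]. *)
Lemma criterion_on_orbit (G : Type) (g0 : G) (ev : G -> B -> B) (P : nat -> B -> B)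
    u (z : nat -> B) :
  (forall g, bounded_linear B (ev g)) -> (forall g k y, ev g (P k y) = P k (ev g y)) ->
  seq_conv B (fun k => P k u) vz -> seq_conv B z vz ->
  seq_conv B (fun k => P k (z k)) u ->
  exists Sk : nat -> B -> B, forall w, (exists g, w = ev g u) ->
    seq_conv B (fun k => P k w) vz /\ seq_conv B (fun k => Sk k w) vz /\
    seq_conv B (fun k => P k (Sk k w)) w.
Proof.
  intros Hev Hcomm HPu Hz HPz.
  set (code w := epsilon (inhabits g0) (fun g => w = ev g u)).
  exists (fun k w => ev (code w) (z k)). intros w Hw.
  assert (Hcode : w = ev (code w) u) by exact (epsilon_spec _ _ Hw).
  set (g := code w) in *. clearbody g.
  assert (Hzero : ev g vz = vz) by apply bl_zero, Hev.
  split; [|split].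
  - rewrite Hcode, <- Hzero. eapply seq_conv_ext; [|exact (seq_conv_bl _ _ _ (Hev _) HPu)].
    intro k. apply Hcomm.
  - rewrite <- Hzero. exact (seq_conv_bl _ _ _ (Hev _) Hz).
  - rewrite Hcode at 1. eapply seq_conv_ext; [|exact (seq_conv_bl _ _ _ (Hev _) HPz)].
    intro k. apply Hcomm.
Qed.

Lemma infinite_dim_nonzero : infinite_dim B -> exists e : B, e <> vz.
Proof.
  intro Hinf. apply NNPP. intro Hnone. apply Hinf.
  exists nil. intro y. exists nil. split; [intros p []|].
  apply NNPP. intro Hy. apply Hnone. exists y. exact Hy.
Qed.

Lemma exists_vector_of_norm (e : B) t : e <> vz -> 0 <= t -> exists h, nrm h = t.
Proof.
  intros He Ht. assert (Hne : 0 < nrm e).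
  { destruct (Rle_lt_or_eq_dec 0 (nrm e) (vnorm_ge0 e)) as [H|H]; [exact H|].
    exfalso. apply He, ax_norm_eq0. auto. }
  exists (vsc (sofR (t / nrm e)) e).
  rewrite ax_norm_scal, sabs_ofR, Rabs_pos_eq by (apply Rle_mult_inv_pos; lra).
  field. lra.
Qed.

Lemma ball_avoid_point (e : B) a c r : e <> vz -> 0 < r ->
  exists c' r', 0 < r' /\ forall w, dst w c' < r' -> dst w c < r /\ w <> a.
Proof.
  intros He Hr. destruct (Rle_or_lt (r / 2) (dst a c)) as [Hfar|Hnear].
  - exists c, (r / 2). split; [lra|]. intros w Hw. split; [lra|]. intros ->. lra.
  - destruct (exists_vector_of_norm e (3 * r / 4) He) as [h Hh]; [lra|].
    assert (Hd : dst (vad c h) c = 3 * r / 4).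
    { unfold Defs.dist, vsub. rewrite (ax_addC K B c h), <- ax_addA, ax_addN, ax_add0.
      exact Hh. }
    exists (vad c h), (r / 8). split; [lra|]. intros w Hw.
    assert (H1 := dist_triangle w (vad c h) c).
    split; [lra|]. intros ->.
    assert (H2 := dist_triangle (vad c h) a c). rewrite (dist_sym (vad c h) a) in H2. lra.
Qed.

Lemma ball_avoid_finite (e : B) l c r : e <> vz -> 0 < r ->
  exists c' r', 0 < r' /\ forall w, dst w c' < r' -> dst w c < r /\ ~ In w l.
Proof.
  intro He. revert c r. induction l as [|a l IH]; intros c r Hr.
  - exists c, r. split; [exact Hr|]. intros w Hw. split; [exact Hw | intros []].
  - destruct (IH c r Hr) as [c1 [r1 [Hr1 H1]]].
    destruct (ball_avoid_point e a c1 r1 He Hr1) as [c2 [r2 [Hr2 H2]]].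
    exists c2, r2. split; [exact Hr2|]. intros w Hw.
    destruct (H2 w Hw) as [Hw1 Hwa]. destruct (H1 w Hw1) as [Hwc Hwl].
    split; [exact Hwc|]. intros [Ea|Ea]; [exact (Hwa (eq_sym Ea)) | exact (Hwl Ea)].
Qed.

(* In a nonzero space a dense orbit cannot end: it meets every ball at arbitrarily
   late times, since the ball minus the finitely many early orbit points still
   contains a ball. *)
Lemma dense_orbit_late (e : B) A z : e <> vz ->
  dense B (fun y => exists n, y = itr B A n z) ->
  forall q eps N, 0 < eps -> exists n, (N < n)%nat /\ dst (itr B A n z) q < eps.
Proof.
  intros He Hd q eps N Heps.
  destruct (ball_avoid_finite e (map (fun j => itr B A j z) (seq 0 (S N))) q eps He Heps)
    as [c [r [Hr Hc]]].
  destruct (Hd c r Hr) as [y [[n ->] Hy]]. destruct (Hc _ Hy) as [H1 H2].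
  exists n. split; [|exact H1].
  destruct (Nat.lt_ge_cases N n) as [h|h]; [exact h|]. exfalso. apply H2.
  apply (in_map (fun j => itr B A j z)). apply in_seq. lia.
Qed.

Section Baire.
Variable U : nat -> B -> Prop.
Hypothesis U_open_dense : forall j c r, 0 < r ->
  exists c' r', 0 < r' /\ forall w, dst w c' < r' -> dst w c < r /\ U j w.

Lemma baire_step j c r : 0 < r -> exists c' r', 0 < r' /\ r' < / (INR j + 1) /\
  forall w, dst w c' < 3 * r' -> dst w c < r /\ U j w.
Proof.
  intro Hr. destruct (U_open_dense j c r Hr) as [c' [r' [Hr' Hin]]].
  assert (Hj : 0 < / (INR j + 1)) by (apply Rinv_0_lt_compat; assert (h := pos_INR j); lra).
  assert (H1 := Rmin_l (r' / 3) (/ (INR j + 1) / 2)).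
  assert (H2 := Rmin_r (r' / 3) (/ (INR j + 1) / 2)).
  exists c', (Rmin (r' / 3) (/ (INR j + 1) / 2)). split; [|split].
  - apply Rmin_glb_lt; lra.
  - lra.
  - intros w Hw. apply Hin. lra.
Qed.

Theorem baire : exists z, forall j, U j z.
Proof.
  destruct (choice (fun (jcr : nat * (B * R)) (cr' : B * R) =>
    0 < snd (snd jcr) -> 0 < snd cr' /\ snd cr' < / (INR (fst jcr) + 1) /\
    forall w, dst w (fst cr') < 3 * snd cr' ->
      dst w (fst (snd jcr)) < snd (snd jcr) /\ U (fst jcr) w)) as [next Hnext].
  { intros [j [c r]]. destruct (Rlt_le_dec 0 r) as [Hr|Hr].
    - destruct (baire_step j c r Hr) as [c' [r' H]]. exists (c', r'). intros _. exact H.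
    - exists (c, r). simpl. lra. }
  set (s := fix s j := match j with O => (vz, 1) | S j => next (j, s j) end).
  assert (Hs : forall j, 0 < snd (s j)).
  { induction j as [|j IH]; [simpl; lra|]. exact (proj1 (Hnext (j, s j) IH)). }
  assert (Hstep : forall j, snd (s (S j)) < / (INR j + 1) /\
    forall w, dst w (fst (s (S j))) < 3 * snd (s (S j)) ->
      dst w (fst (s j)) < snd (s j) /\ U j w).
  { intro j. exact (proj2 (Hnext (j, s j) (Hs j))). }
  assert (Hnested : forall j m w, (j <= m)%nat ->
    dst w (fst (s m)) < snd (s m) -> dst w (fst (s j)) < snd (s j)).
  { intros j m w Hjm. induction Hjm as [|m Hjm IH]; [auto|].
    intro Hw. apply IH, (proj2 (Hstep m)). assert (H := Hs (S m)). lra. }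
  assert (Hcenter : forall j m, (j <= m)%nat -> dst (fst (s m)) (fst (s j)) < snd (s j)).
  { intros j m Hjm. apply (Hnested j m); [exact Hjm|]. rewrite dist_refl. apply Hs. }
  assert (Hcauchy : cauchy B (fun k => fst (s k))).
  { intros eps Heps. destruct (INR_archimed eps 2 Heps) as [n Hn].
    exists (S n). intros a b Ha Hb.
    assert (H1 := Hcenter (S n) a Ha). assert (H2 := Hcenter (S n) b Hb).
    assert (H3 := dist_triangle (fst (s a)) (fst (s (S n))) (fst (s b))).
    rewrite (dist_sym (fst (s (S n)))) in H3.
    assert (H4 : / (INR n + 1) * (INR n + 1) = 1) by (field; assert (h := pos_INR n); lra).
    assert (H5 := proj1 (Hstep n)). assert (h := pos_INR n). nra. }
  destruct (ax_complete K B _ Hcauchy) as [z Hz]. exists z. intro j.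
  apply (proj2 (Hstep j)).
  assert (Hle := seq_conv_dist_le _ z (fst (s (S j))) (snd (s (S j))) (S j) Hz).
  assert (H := Hs (S j)).
  enough (dst z (fst (s (S j))) <= snd (s (S j))) by lra.
  apply Hle. intros m Hm. left. apply Hcenter, Hm.
Qed.

End Baire.

Definition topologically_transitive (A : B -> B) : Prop :=
  forall c1 c2 r, 0 < r -> exists z n, dst z c1 < r /\ dst (itr B A n z) c2 < r.

Lemma inv_INR_succ_lt eps : 0 < eps -> exists m, / (INR m + 1) < eps.
Proof.
  intro Heps. destruct (INR_archimed eps 1 Heps) as [m Hm]. exists m.
  assert (h := pos_INR m).
  apply (Rmult_lt_reg_r (INR m + 1)); [lra|]. rewrite Rinv_l by lra. nra.
Qed.

(* The orbit points are found by the Baire category theorem, applied to the open dense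
   sets of vectors whose orbit enters the ball around [d i] of radius [1/(m+1)]. *)
Theorem birkhoff_transitivity A (d : nat -> B) : bounded_linear B A ->
  dense B (fun y => exists i, y = d i) -> topologically_transitive A -> hypercyclic B A.
Proof.
  intros HA Hd Htr.
  set (target j := d (fst (of_nat j))). set (radius j := / (INR (snd (of_nat j)) + 1)).
  assert (Hrad : forall j, 0 < radius j).
  { intro j. apply Rinv_0_lt_compat. assert (h := pos_INR (snd (of_nat j))). lra. }
  destruct (baire (fun j w => exists n, dst (itr B A n w) (target j) < radius j))
    as [z Hz].
  { intros j c r Hr.
    assert (Hmin := Rmin_glb_lt _ _ _ Hr (Hrad j)).
    destruct (Htr c (target j) _ Hmin) as [z [n [Hzc Hn]]].
    assert (H1 := Rmin_l r (radius j)). assert (H2 := Rmin_r r (radius j)).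
    destruct (bl_open_preimage _ (bl_itr A n HA) z (target j) (radius j))
      as [delta [Hdel Hpre]]; [lra|].
    exists z, (Rmin delta (r - dst z c)). split; [apply Rmin_glb_lt; lra|].
    intros w Hw. assert (H3 := Rmin_l delta (r - dst z c)).
    assert (H4 := Rmin_r delta (r - dst z c)). assert (H5 := dist_triangle w z c).
    split; [lra|]. exists n. apply Hpre. lra. }
  exists z. intros y eps Heps.
  destruct (inv_INR_succ_lt (eps / 2)) as [m Hm]; [lra|].
  destruct (Hd y (eps / 2)) as [t [[i ->] Hi]]; [lra|].
  destruct (Hz (to_nat (i, m))) as [n Hn].
  unfold target, radius in Hn. rewrite cancel_of_to in Hn. simpl in Hn.
  exists (itr B A n z). split; [eauto|].
  assert (H := dist_triangle (itr B A n z) (d i) y). lra.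
Qed.

Lemma CC_approx A : bounded_linear B A -> CyclicityCriterion B A ->
  exists p : nat -> list K, forall a b eps, 0 < eps -> exists N, forall k, (N <= k)%nat ->
    exists u, dst u a < eps /\ dst (peval B A (p k) u) b < eps.
Proof.
  intros HA [V [W [p [Sk [HV [HW [HPV [HSW HPSW]]]]]]]].
  exists p. intros a b eps Heps. set (d := eps / 3).
  destruct (HV a d) as [v [Vv Hv]]; [unfold d; lra|].
  destruct (HW b d) as [w [Ww Hw]]; [unfold d; lra|].
  destruct (HPV v Vv d) as [N1 HN1]; [unfold d; lra|].
  destruct (HSW w Ww d) as [N2 HN2]; [unfold d; lra|].
  destruct (HPSW w Ww d) as [N3 HN3]; [unfold d; lra|].
  exists (Nat.max N1 (Nat.max N2 N3)). intros k Hk.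
  specialize (HN1 k ltac:(lia)). specialize (HN2 k ltac:(lia)). specialize (HN3 k ltac:(lia)).
  simpl in HN1, HN2, HN3. exists (vad v (Sk k w)). split.
  - rewrite <- (ax_add0 K B a). eapply Rle_lt_trans; [apply dist_addD|]. unfold d in *. lra.
  - rewrite bl_add by apply bl_peval, HA. rewrite <- (vadd0l b).
    eapply Rle_lt_trans; [apply dist_addD|].
    assert (H := dist_triangle (peval B A (p k) (Sk k w)) w b). unfold d in *. lra.
Qed.

(* [A^n (A^c x) - p(A) (A^c x) = A^c (A^n x - p(A) x)]. *)
Lemma orbit_tracks_poly A x p c eps : bounded_linear B A -> 0 < eps ->
  exists delta, 0 < delta /\ forall n, dst (itr B A n x) (peval B A p x) < delta ->
    dst (itr B A n (itr B A c x)) (peval B A p (itr B A c x)) < eps.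
Proof.
  intros HA Heps. destruct (bl_continuous _ (bl_itr A c HA) eps Heps) as [delta [Hd Hc]].
  exists delta. split; [exact Hd|]. intros n Hn.
  rewrite itr_itr, <- itr_peval by exact HA. apply Hc, Hn.
Qed.

End NormedSpace.

Section DirectSum.
Context {K : Scal} {laws : ScalarLaws K} (B : Banach K).

Local Notation vz := (vzero B).
Local Notation nrm := (vnorm B).
Local Notation dst := (Defs.dist B).
Local Notation X2 := (prodOps B).

Definition prodB : Banach K.
Proof.
  refine (@Build_Banach K X2 _ _ _ _ _ _ _ _ _ _ _ _).
  - intros [a b] [c d] [e f]; simpl; f_equal; apply ax_addA.
  - intros [a b] [c d]; simpl; f_equal; apply ax_addC.
  - intros [a b]; simpl; f_equal; apply ax_add0.
  - intros [a b]; simpl; f_equal; apply ax_addN.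
  - intros [a b]; simpl; f_equal; apply ax_scal1.
  - intros s t [a b]; simpl; f_equal; apply ax_scalA.
  - intros s t [a b]; simpl; f_equal; apply ax_scalDl.
  - intros s [a b] [c d]; simpl; f_equal; apply ax_scalDr.
  - intros [a b]; simpl; intro H.
    assert (Ha := vnorm_ge0 B a). assert (Hb := vnorm_ge0 B b).
    assert (H1 := Rmax_l (nrm a) (nrm b)). assert (H2 := Rmax_r (nrm a) (nrm b)).
    f_equal; apply ax_norm_eq0; lra.
  - intros [a b] [c d]; simpl. apply Rmax_lub.
    + eapply Rle_trans; [apply ax_norm_triangle|]. apply Rplus_le_compat; apply Rmax_l.
    + eapply Rle_trans; [apply ax_norm_triangle|]. apply Rplus_le_compat; apply Rmax_r.
  - intros s [a b]; simpl. rewrite !ax_norm_scal. apply RmaxRmult, sabs_ge0.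
  - intros u Hu.
    assert (H1 : cauchy B (fun k => fst (u k))).
    { intros e He. destruct (Hu e He) as [N HN]. exists N. intros m n Hm Hn.
      exact (proj1 (proj1 (Rmax_Rlt _ _ _) (HN m n Hm Hn))). }
    assert (H2 : cauchy B (fun k => snd (u k))).
    { intros e He. destruct (Hu e He) as [N HN]. exists N. intros m n Hm Hn.
      exact (proj2 (proj1 (Rmax_Rlt _ _ _) (HN m n Hm Hn))). }
    destruct (ax_complete K B _ H1) as [l1 L1]. destruct (ax_complete K B _ H2) as [l2 L2].
    exists (l1, l2). intros e He.
    destruct (L1 e He) as [N1 HN1]. destruct (L2 e He) as [N2 HN2].
    exists (Nat.max N1 N2). intros k Hk. apply Rmax_lub_lt; [apply HN1 | apply HN2]; lia.
Defined.

Lemma dist_prod_lt (p q : X2) r :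
  Defs.dist X2 p q < r <-> dst (fst p) (fst q) < r /\ dst (snd p) (snd q) < r.
Proof. apply Rmax_Rlt. Qed.

Lemma itr_dsum A n (a b : B) : itr X2 (dsum A) n (a, b) = (itr B A n a, itr B A n b).
Proof.
  induction n as [|n IH]; [reflexivity|].
  change (dsum A (itr X2 (dsum A) n (a, b)) = (A (itr B A n a), A (itr B A n b))).
  rewrite IH. reflexivity.
Qed.

Lemma peval_dsum A p (a b : B) : peval X2 (dsum A) p (a, b) = (peval B A p a, peval B A p b).
Proof.
  revert a b. induction p as [|c p IH]; intros a b; [reflexivity|].
  change (vadd X2 (vscal X2 c (a, b)) (peval X2 (dsum A) p (A a, A b)) =
          (vadd B (vscal B c a) (peval B A p (A a)),
           vadd B (vscal B c b) (peval B A p (A b)))).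
  rewrite IH. reflexivity.
Qed.

Lemma bl_dsum A : bounded_linear B A -> bounded_linear X2 (dsum A).
Proof.
  intro HA. destruct (bl_bound B A HA) as [M [HM HMA]]. split; [|split].
  - intros [a b] [c d]. unfold dsum; simpl. rewrite !(bl_add B A HA). reflexivity.
  - intros s [a b]. unfold dsum; simpl. rewrite !(bl_scal B A HA). reflexivity.
  - exists M. intros [a b]. unfold dsum; simpl. rewrite <- RmaxRmult by lra.
    apply Rmax_lub; eapply Rle_trans; [apply HMA | apply Rmax_l | apply HMA | apply Rmax_r].
Qed.

Lemma dsum_shift A C mu : (forall x, A x = vadd B (vscal B mu x) (C x)) ->
  forall p : X2, dsum A p = vadd X2 (vscal X2 mu p) (dsum C p).
Proof. intros HAC [a b]. unfold dsum; simpl. rewrite !HAC. reflexivity. Qed.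

Lemma dense_fst (D : X2 -> Prop) : dense X2 D -> dense B (fun x => exists y, D (x, y)).
Proof.
  intros HD y eps Heps. destruct (HD (y, y) eps Heps) as [[a b] [Hab Hd]].
  exists a. split; [eauto | exact (proj1 (proj1 (dist_prod_lt _ _ _) Hd))].
Qed.

Lemma orbit_pairs_dense A x : dense B (fun y => exists n, y = itr B A n x) ->
  dense X2 (fun w => exists j, w = (itr B A (fst (of_nat j)) x, itr B A (snd (of_nat j)) x)).
Proof.
  intros Hx [y1 y2] eps Heps.
  destruct (Hx y1 eps Heps) as [o1 [[i1 ->] H1]].
  destruct (Hx y2 eps Heps) as [o2 [[i2 ->] H2]].
  exists (itr B A i1 x, itr B A i2 x). split.
  - exists (to_nat (i1, i2)). rewrite cancel_of_to. reflexivity.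
  - apply dist_prod_lt. auto.
Qed.

(* Choose [u1], [u2] that [p(A)] moves near [b1], [b2], then orbit points [A^ci x] near
   them, and finally [n] with [A^n x] near [p(A) x]: as [A^n] commutes with [A^ci],
   [A^n] then acts like [p(A)] on both orbit points. *)
Lemma CC_dsum_transitive A x : bounded_linear B A -> CyclicityCriterion B A ->
  dense B (fun y => exists n, y = itr B A n x) -> topologically_transitive prodB (dsum A).
Proof.
  intros HA HCC Hx [a1 a2] [b1 b2] r Hr. set (eps := r / 3).
  assert (Heps : 0 < eps) by (unfold eps; lra).
  destruct (CC_approx B A HA HCC) as [p Hp].
  destruct (Hp a1 b1 eps Heps) as [N1 HN1]. destruct (Hp a2 b2 eps Heps) as [N2 HN2].
  destruct (HN1 (Nat.max N1 N2) ltac:(lia)) as [u1 [Hu1 HPu1]].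
  destruct (HN2 (Nat.max N1 N2) ltac:(lia)) as [u2 [Hu2 HPu2]].
  set (P := peval B A (p (Nat.max N1 N2))) in *.
  destruct (bl_continuous B P (bl_peval B A _ HA) eps Heps) as [dP [HdP HPc]].
  assert (Hclose : forall a b u y y', dst u a < eps -> dst (P u) b < eps ->
    dst y u < Rmin eps dP -> dst y' (P y) < eps -> dst y a < r /\ dst y' b < r).
  { intros a b u y y' Hua HPub Hyu Hy'.
    assert (H1 := Rmin_l eps dP). assert (H2 := Rmin_r eps dP).
    assert (H3 := HPc y u ltac:(lra)). assert (H4 := dist_triangle B y u a).
    assert (H5 := dist_triangle B y' (P y) b). assert (H6 := dist_triangle B (P y) (P u) b).
    unfold eps in *. split; lra. }
  assert (Hmin : 0 < Rmin eps dP) by (apply Rmin_glb_lt; assumption).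
  destruct (Hx u1 _ Hmin) as [o1 [[c1 ->] Ho1]]. destruct (Hx u2 _ Hmin) as [o2 [[c2 ->] Ho2]].
  destruct (orbit_tracks_poly B A x (p (Nat.max N1 N2)) c1 eps HA Heps) as [d1 [Hd1 Ht1]].
  destruct (orbit_tracks_poly B A x (p (Nat.max N1 N2)) c2 eps HA Heps) as [d2 [Hd2 Ht2]].
  destruct (Hx (P x) (Rmin d1 d2)) as [o [[n ->] Ho]]; [apply Rmin_glb_lt; assumption|].
  assert (E1 := Rmin_l d1 d2). assert (E2 := Rmin_r d1 d2).
  destruct (Hclose a1 b1 u1 _ (itr B A n (itr B A c1 x)) Hu1 HPu1 Ho1) as [F1 G1];
    [apply Ht1; exact (Rlt_le_trans _ _ _ Ho E1)|].
  destruct (Hclose a2 b2 u2 _ (itr B A n (itr B A c2 x)) Hu2 HPu2 Ho2) as [F2 G2];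
    [apply Ht2; exact (Rlt_le_trans _ _ _ Ho E2)|].
  exists (itr B A c1 x, itr B A c2 x), n.
  change (Defs.dist X2 (itr B A c1 x, itr B A c2 x) (a1, a2) < r /\
          Defs.dist X2 (itr X2 (dsum A) n (itr B A c1 x, itr B A c2 x)) (b1, b2) < r).
  rewrite itr_dsum, !dist_prod_lt. auto.
Qed.

Lemma CC_dsum_hypercyclic A : bounded_linear B A -> CyclicityCriterion B A ->
  hypercyclic B A -> hypercyclic X2 (dsum A).
Proof.
  intros HA HCC [x Hx].
  exact (birkhoff_transitivity prodB (dsum A) _ (bl_dsum A HA) (orbit_pairs_dense A x Hx)
           (CC_dsum_transitive A x HA HCC Hx)).
Qed.

(* With [(r(A) u, r(A) v)] near [(u, 0)] and [(p(A) u, p(A) v)] near [(0, u)], the vector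
   [z = r(A) v] is small while [p(A) z = r(A) (p(A) v)] is near [r(A) u], hence near [u]. *)
Lemma dsum_cyclic_step A u v eps : bounded_linear B A -> 0 < eps ->
  dense X2 (fun w => exists q, w = peval X2 (dsum A) q (u, v)) ->
  exists p z, nrm (peval B A p u) < eps /\ nrm z < eps /\ dst (peval B A p z) u < eps.
Proof.
  intros HA Heps Hd.
  destruct (Hd (u, vz) (eps / 2)) as [w [[r ->] Hr]]; [lra|].
  rewrite peval_dsum, dist_prod_lt in Hr. cbn [fst snd] in Hr.
  rewrite dist_x0 in Hr. destruct Hr as [Hru Hrv].
  destruct (bl_open_preimage B _ (bl_peval B A r HA) u u eps) as [delta [Hdel Hpre]]; [lra|].
  destruct (Hd (vz, u) (Rmin eps delta)) as [w [[p ->] Hp]]; [apply Rmin_glb_lt; lra|].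
  rewrite peval_dsum, dist_prod_lt in Hp. cbn [fst snd] in Hp.
  rewrite dist_x0 in Hp. destruct Hp as [Hpu Hpv].
  assert (H1 := Rmin_l eps delta). assert (H2 := Rmin_r eps delta).
  exists p, (peval B A r v). split; [lra | split; [lra|]].
  rewrite peval_peval by exact HA. apply Hpre. lra.
Qed.

Lemma dsum_cyclic_CC A : bounded_linear B A -> cyclic X2 (dsum A) -> CyclicityCriterion B A.
Proof.
  intros HA [[u v] Hd].
  set (D := fun w => exists q, w = peval B A q u).
  assert (HD : dense B D).
  { refine (dense_mono B _ _ _ (dense_fst _ Hd)). intros w [w' [q Hq]].
    rewrite peval_dsum in Hq. injection Hq as -> _. exists q. reflexivity. }
  assert (Hk : forall k, 0 < / (INR k + 1))
    by (intro k; apply Rinv_0_lt_compat; assert (h := pos_INR k); lra).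
  destruct (choice (fun k (pz : list K * B) =>
    nrm (peval B A (fst pz) u) < / (INR k + 1) /\ nrm (snd pz) < / (INR k + 1) /\
    dst (peval B A (fst pz) (snd pz)) u < / (INR k + 1))) as [f Hf].
  { intro k. destruct (dsum_cyclic_step A u v _ HA (Hk k) Hd) as [p [z Hpz]].
    exists (p, z). exact Hpz. }
  destruct (criterion_on_orbit B (list K) nil (peval B A) (fun k => peval B A (fst (f k)))
              u (fun k => snd (f k))) as [Sk HSk].
  - intro q. apply bl_peval, HA.
  - intros q k y. apply peval_peval, HA.
  - apply seq_conv_harmonic. intro k. rewrite dist_x0. apply Hf.
  - apply seq_conv_harmonic. intro k. rewrite dist_x0. apply Hf.
  - apply seq_conv_harmonic. intro k. apply Hf.
  - exists D, D, (fun k => fst (f k)), Sk.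
    repeat split; try exact HD; intros w Hw; apply HSk, Hw.
Qed.

(* As in [dsum_cyclic_step], with the second return of the orbit taken after time [N]. *)
Lemma dsum_hypercyclic_step (e : B) A x y eps N : e <> vz -> bounded_linear B A -> 0 < eps ->
  dense X2 (fun w => exists n, w = itr X2 (dsum A) n (x, y)) ->
  exists n z, (N < n)%nat /\ nrm (itr B A n x) < eps /\ nrm z < eps /\
    dst (itr B A n z) x < eps.
Proof.
  intros He HA Heps Hd.
  destruct (Hd (x, vz) (eps / 2)) as [w [[r ->] Hr]]; [lra|].
  rewrite itr_dsum, dist_prod_lt in Hr. cbn [fst snd] in Hr.
  rewrite dist_x0 in Hr. destruct Hr as [Hrx Hry].
  destruct (bl_open_preimage B _ (bl_itr B A r HA) x x eps) as [delta [Hdel Hpre]]; [lra|].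
  assert (He2 : ((e, e) : X2) <> vzero X2) by (intro H; injection H as H _; exact (He H)).
  destruct (dense_orbit_late prodB (e, e) (dsum A) (x, y) He2 Hd (vz, x) (Rmin eps delta) N)
    as [n [Hn Hclose]]; [apply Rmin_glb_lt; lra|].
  change (Defs.dist X2 (itr X2 (dsum A) n (x, y)) (vz, x) < Rmin eps delta) in Hclose.
  rewrite itr_dsum, dist_prod_lt in Hclose. cbn [fst snd] in Hclose.
  rewrite dist_x0 in Hclose. destruct Hclose as [Hnx Hny].
  assert (H1 := Rmin_l eps delta). assert (H2 := Rmin_r eps delta).
  exists n, (itr B A r y). split; [exact Hn | split; [lra | split; [lra|]]].
  rewrite itr_itr. apply Hpre. lra.
Qed.

Lemma dsum_hypercyclic_HC (e : B) A : e <> vz -> bounded_linear B A ->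
  hypercyclic X2 (dsum A) -> HypercyclicityCriterion B A.
Proof.
  intros He HA [[x y] Hd].
  set (D := fun w => exists m, w = itr B A m x).
  assert (HD : dense B D).
  { refine (dense_mono B _ _ _ (dense_fst _ Hd)). intros w [w' [m Hm]].
    rewrite itr_dsum in Hm. injection Hm as -> _. exists m. reflexivity. }
  assert (Hk : forall k, 0 < / (INR k + 1))
    by (intro k; apply Rinv_0_lt_compat; assert (h := pos_INR k); lra).
  destruct (increasing_choice (fun k n => exists z,
    nrm (itr B A n x) < / (INR k + 1) /\ nrm z < / (INR k + 1) /\
    dst (itr B A n z) x < / (INR k + 1))) as [ns [Hpos [Hinc Hns]]].
  { intros k N. destruct (dsum_hypercyclic_step e A x y _ N He HA (Hk k) Hd)
      as [n [z [HN Hz]]].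
    exists n. split; [exact HN|]. exists z. exact Hz. }
  destruct (choice (fun k z => nrm (itr B A (ns k) x) < / (INR k + 1) /\
    nrm z < / (INR k + 1) /\ dst (itr B A (ns k) z) x < / (INR k + 1))) as [z Hz].
  { exact Hns. }
  destruct (criterion_on_orbit B nat O (itr B A) (fun k => itr B A (ns k)) x z) as [Sk HSk].
  - intro m. apply bl_itr, HA.
  - intros m k w. apply itr_itr.
  - apply seq_conv_harmonic. intro k. rewrite dist_x0. apply Hz.
  - apply seq_conv_harmonic. intro k. rewrite dist_x0. apply Hz.
  - apply seq_conv_harmonic. intro k. apply Hz.
  - exists D, D, ns, Sk.
    repeat split; try exact HD; try assumption; intros w Hw; apply HSk, Hw.
Qed.

End DirectSum.

Theorem mainTheorem1 (kk : KKind) (X : Banach (Kof kk))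
  (Hsep : separable X) (Hinf : infinite_dim X)
  (T S : X -> X) (HT : bounded_linear X T) (HS : bounded_linear X S)
  (lam : Kof kk) (HTS : forall x : X, T x = vadd X (vscal X lam x) (S x))
  (Hhc : hypercyclic X T) :
  (HypercyclicityCriterion X T <-> CyclicityCriterion X T) /\
  (CyclicityCriterion X T <-> CyclicityCriterion X S) /\
  (CyclicityCriterion X S <-> cyclic (prodOps X) (dsum S)) /\
  (cyclic (prodOps X) (dsum S) <-> cyclic (prodOps X) (dsum T)) /\
  (cyclic (prodOps X) (dsum T) <-> hypercyclic (prodOps X) (dsum T)).
Proof.
  destruct (infinite_dim_nonzero X Hinf) as [e He].
  destruct (shift_polys_equiv X T S lam HT HS HTS) as [TS ST].
  destruct (shift_polys_equiv (prodB X) (dsum T) (dsum S) lam (bl_dsum X T HT)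
              (bl_dsum X S HS) (dsum_shift X T S lam HTS)) as [TS2 ST2].
  assert (i_ii := HC_CC X T).
  assert (ii_iii := CC_polys_in X T S TS).
  assert (iii_ii := CC_polys_in X S T ST).
  assert (ii_vi : CyclicityCriterion X T -> hypercyclic (prodOps X) (dsum T))
    by (intro H; exact (CC_dsum_hypercyclic X T HT H Hhc)).
  assert (vi_i := dsum_hypercyclic_HC X e T He HT).
  assert (vi_v : hypercyclic (prodOps X) (dsum T) -> cyclic (prodOps X) (dsum T))
    by exact (hypercyclic_cyclic (prodB X) (dsum T)).
  assert (v_iv : cyclic (prodOps X) (dsum T) -> cyclic (prodOps X) (dsum S))
    by exact (cyclic_polys_in (prodB X) _ _ TS2).
  assert (iv_v : cyclic (prodOps X) (dsum S) -> cyclic (prodOps X) (dsum T))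
    by exact (cyclic_polys_in (prodB X) _ _ ST2).
  assert (iv_iii := dsum_cyclic_CC X S HS).
  tauto.
Qed.
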